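(* Let $\lambda$ be a partition with $n$ parts and let $\eta \in UGC_\lambda(n)$. Then the gapless $\lambda$-tuple $\Delta_\lambda(\eta)$ attains maximum efficiency.
   Context: Fix an integer $n \geq 1$ and write $[k] = \{1,\dots,k\}$. A partition is $\lambda = (\lambda_1,\dots,\lambda_n)$ with $\lambda_1 \geq \dots \geq \lambda_n \geq 0$ integers. Let $R_\lambda \subseteq [n-1]$ be the set of $q \in [n-1]$ with $\lambda_q > \lambda_{q+1}$; write its elements $q_1 < \dots < q_r$, and set $q_0 := 0$, $q_{r+1} := n$. For $h \in [r+1]$ the $h$-th carrel is the index interval $\{q_{h-1}+1,\dots,q_h\}$. A $\lambda$-tuple is an $n$-tuple $\beta$ with entries in $[n]$, considered with this carrel structure; it is upper if $\beta_i \geq i$ for all $i$. $U_\lambda(n)$ is the set of upper $\lambda$-tuples. Critical indices: for $\beta \in U_\lambda(n)$ and $h \in [r+1]$, set $x_1 := q_h$; given $x_{u-1}$, if some index $x$ with $q_{h-1} < x < x_{u-1}$ satisfies $\beta_{x_{u-1}} - \beta_x > x_{u-1} - x$, let $x_u$ be the largest such $x$, otherwise stop. The $x_u$ are the critical indices of $\beta$ in carrel $h$; the pairs $(x_u,\beta_{x_u})$ form its critical list. For $i \in [n]$ let $x(i)$ be the smallest critical index in the carrel of $i$ with $x(i) \geq i$. The $\lambda$-core is $\Delta_\lambda(\beta) := \delta$ with $\delta_i := \beta_{x(i)} - (x(i)-i)$; the $\lambda$-platform is $\Xi_\lambda(\beta) := \xi$ with $\xi_i := \beta_{x(i)}$.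 The critical list is a flag critical list if for every $h \in [r]$, $\beta_{q_h} \leq \beta_k$ where $k$ is the smallest critical index of $\beta$ in carrel $h+1$. $UGC_\lambda(n)$: the $\beta \in U_\lambda(n)$ with flag critical list. $UBP_\lambda(n)$: the $\beta \in U_\lambda(n)$ with $\beta \leq \Xi_\lambda(\beta)$ entrywise. A gapless $\lambda$-tuple is a $\beta \in U_\lambda(n)$ with flag critical list whose entries strictly increase within each carrel. A semistandard tableau of shape $\lambda$ is a filling of the Young diagram of $\lambda$ (row $i$ has $\lambda_i$ boxes) with values in $[n]$, weakly increasing along rows and strictly increasing down columns. For $\beta \in U_\lambda(n)$, $s_\lambda(\beta;x) := \sum_T \prod_{k} x_k^{\theta_k(T)}$ over the semistandard tableaux $T$ of shape $\lambda$ whose values in row $i$ are all at most $\beta_i$, where $\theta_k(T)$ is the number of values of $T$ equal to $k$. For integers $u$, $i \geq 1$, $k \geq 1$: $h_u(i,k;x) := 0$ if $u<0$, and otherwise $h_u(i,k;x) := \sum x_{t_1}\cdots x_{t_u}$ over $i \leq t_1 \leq \dots \leq t_u \leq k$. For $\beta \in U_\lambda(n)$ the Gessel–Viennot determinant of $\beta$ is the $n\times n$ matrix determinant with $(i,j)$ entry $h_{\lambda_j - j + i}(i,\beta_j;x)$. An element $\eta \in UGC_\lambda(n) \cap UBP_\lambda(n)$ attains maximum efficiency if the total number of monomials appearing among the entries of its Gessel–Viennot matrix is smaller than that for the Gessel–Viennot matrix of any other $\eta' \in UGC_\lambda(n) \cap UBP_\lambda(n)$ with $s_\lambda(\eta';x)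 = s_\lambda(\eta;x)$. *)

From mathcomp Require Import all_boot all_order all_algebra.
From mathcomp Require Import mpoly.
Unset Printing Implicit Defensive.
Import GRing.Theory.

(* Sequences of length n represent n-tuples; [ent s i] is the 1-based entry s_i. *)
Definition ent (s : seq nat) (i : nat) : nat := nth 0 s i.-1.

Definition is_partition (n : nat) (lam : seq nat) : bool :=
  (size lam == n) && sorted geq lam.

Definition inR (n : nat) (lam : seq nat) (q : nat) : bool :=
  [&& 1 <= q, q < n & ent lam q.+1 < ent lam q].

(* carrel of i (1<=i<=n) is the interval (lo i, hi i] *)
Definition clo (n : nat) (lam : seq nat) (i : nat) : nat :=
  \max_(0 <= q < i | inR n lam q) q.
Definition chi (n : nat) (lam : seq nat) (i : nat) : nat :=
  \big[minn/n]_(i <= q < n | inR n lam q) q.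

(* largest y with lo < y < x and beta_x - beta_y > x - y *)
Definition next_crit (beta : seq nat) (lo x : nat) : option nat :=
  let c := [seq y <- iota lo.+1 (x.-1 - lo) | x + ent beta y < ent beta x + y] in
  if c is [::] then None else Some (last 0 c).

Fixpoint crit_from (beta : seq nat) (lo x fuel : nat) : seq nat :=
  x :: match fuel with
       | 0 => [::]
       | f.+1 => match next_crit beta lo x with
                 | Some y => crit_from beta lo y f
                 | None => [::]
                 end
       end.

Definition crit (beta : seq nat) (lo hi : nat) : seq nat := crit_from beta lo hi hi.

Definition xcrit (n : nat) (lam beta : seq nat) (i : nat) : nat :=
  \big[minn/chi n lam i]_(c <- crit beta (clo n lam i) (chi n lam i) | i <= c) c.

Definition core (n : nat) (lam beta : seq nat) : seq nat :=
  [seq ent beta (xcrit n lam beta i) - (xcrit n lam beta i - i) | i <- iota 1 n].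
Definition platform (n : nat) (lam beta : seq nat) : seq nat :=
  [seq ent beta (xcrit n lam beta i) | i <- iota 1 n].

Definition upper (n : nat) (beta : seq nat) : Prop :=
  size beta = n /\ forall i, 1 <= i <= n -> i <= ent beta i <= n.

Definition flag_crit (n : nat) (lam beta : seq nat) : Prop :=
  forall q, inR n lam q ->
    ent beta q <= ent beta (\big[minn/n]_(c <- crit beta q (chi n lam q.+1)) c).

Definition UGC (n : nat) (lam beta : seq nat) : Prop :=
  upper n beta /\ flag_crit n lam beta.
Definition UBP (n : nat) (lam beta : seq nat) : Prop :=
  upper n beta /\ forall i, 1 <= i <= n -> ent beta i <= ent (platform n lam beta) i.

Definition gapless (n : nat) (lam beta : seq nat) : Prop :=
  [/\ upper n beta, flag_crit n lam beta &
      forall i, 1 <= i < n -> chi n lam i = chi n lam i.+1 ->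
        ent beta i < ent beta i.+1].

(* semistandard tableaux of shape lambda, row i bounded by beta_i;
   cell (i,j) (0-based) lies in the diagram iff j < lambda_{i+1};
   values are in 'I_n.+1, with 0 used only (and always) outside the diagram *)
Definition ncols (lam : seq nat) : nat := nth 0 lam 0.
Definition indiag (lam : seq nat) (i j : nat) : bool := j < nth 0 lam i.

Definition ssyt (n : nat) (lam beta : seq nat)
    (T : {ffun 'I_n * 'I_(ncols lam) -> 'I_n.+1}) : bool :=
  [&& [forall c : 'I_n * 'I_(ncols lam),
         if indiag lam c.1 c.2 then (1 <= T c) && (T c <= nth 0 beta c.1)
         else T c == ord0],
      [forall i : 'I_n, forall j1 : 'I_(ncols lam), forall j2 : 'I_(ncols lam),
         (j1 <= j2) && indiag lam i j2 ==> (T (i, j1) <= T (i, j2))] &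
      [forall i1 : 'I_n, forall i2 : 'I_n, forall j : 'I_(ncols lam),
         (i1 < i2) && indiag lam i2 j ==> (T (i1, j) < T (i2, j))]].

(* x_{k+1} is 'X_k for k : 'I_n *)
Definition theta (n : nat) (lam : seq nat)
    (T : {ffun 'I_n * 'I_(ncols lam) -> 'I_n.+1}) (k : 'I_n) : nat :=
  #|[set c : 'I_n * 'I_(ncols lam) | indiag lam c.1 c.2 && (val (T c) == k.+1)]|.

Definition schur (n : nat) (lam beta : seq nat) : {mpoly int[n]} :=
  \sum_(T : {ffun 'I_n * 'I_(ncols lam) -> 'I_n.+1} | ssyt n lam beta T)
     \prod_(k < n) 'X_k ^+ theta n lam T k.

Definition hpoly (n u i k : nat) : {mpoly int[n]} :=
  \sum_(m : 'X_{1..n < u.+1} |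
          (mdeg m == u) && [forall l : 'I_n, (m l != 0) ==> (i <= l.+1 <= k)])
     'X_[bmnm m].

Definition GVmx (n : nat) (lam beta : seq nat) : 'M[{mpoly int[n]}]_n :=
  \matrix_(i < n, j < n)
     (if ent lam j.+1 + i.+1 < j.+1 then 0%R
      else hpoly n (ent lam j.+1 + i.+1 - j.+1) i.+1 (ent beta j.+1)).

Definition GVcost (n : nat) (lam beta : seq nat) : nat :=
  \sum_(i < n) \sum_(j < n) size (msupp (GVmx n lam beta i j)).

Definition max_efficiency (n : nat) (lam eta : seq nat) : Prop :=
  UGC n lam eta /\ UBP n lam eta /\
  forall eta', UGC n lam eta' -> UBP n lam eta' -> eta' <> eta ->
    schur n lam eta' = schur n lam eta ->
    GVcost n lam eta < GVcost n lam eta'.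

From Pilot Require Import Defs.
From mathcomp Require Import all_boot all_order all_algebra.
From mathcomp Require Import mpoly.
From mathcomp Require Import zify.
Set Implicit Arguments. Unset Strict Implicit. Unset Printing Implicit Defensive.
Import GRing.Theory Num.Theory.

(** In a tableau whose row [r] is bounded by [eta_r], the rows [i .. x(i)]
    lie in one carrel and so have equal length; column strictness then bounds
    row [i] by [eta_{x(i)} - (x(i) - i)], the [i]-th entry of the core.  Thus
    [eta] and its core bound the same tableaux and have the same flagged Schur
    function.  The core also has the critical list of [eta], which makes it
    flagged, below its platform, and strictly increasing inside carrels.

    A flag that strictly increases inside carrels is determined by its flagged
    Schur function: if two such flags [g], [g'] agree after row [i] and
    [g'_i < g_i], the [g]-tableau filling each row [r < i] with [r] and every
    other cell with the largest value column strictness allows has a content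
    that no [g']-tableau realises, by comparing the number and then the sum of
    the entries [>= i].  Hence a competitor [eta'] with the same Schur function
    has the same core, lies weakly above it and strictly in some row [j < n];
    the Gessel-Viennot entries [h(i, beta_j)] gain monomials as [beta_j] grows,
    strictly in row [j + 1], so [eta'] costs more. *)

Lemma geq_bigmin_seq (I : eqType) (r : seq I) (P : pred I) (F : I -> nat) d i0 :
  i0 \in r -> P i0 -> \big[minn/d]_(i <- r | P i) F i <= F i0.
Proof.
move=> + Pi0; elim: r => // h t IH; rewrite inE big_cons.
move=> /predU1P[<-|i0t]; first by rewrite Pi0 geq_minl.
by case: ifP => _; [rewrite geq_min IH // orbT|rewrite IH].
Qed.

Lemma leq_bigmin_seq (I : eqType) (r : seq I) (P : pred I) (F : I -> nat) d m :
  m <= d -> (forall i, i \in r -> P i -> m <= F i) ->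
  m <= \big[minn/d]_(i <- r | P i) F i.
Proof.
move=> md mF; rewrite big_seq_cond; elim/big_ind: _ => // [x y|i /andP[]].
  by rewrite leq_min => -> ->.
exact: mF.
Qed.

Lemma bigmin_leq_id (I : eqType) (r : seq I) (P : pred I) (F : I -> nat) d :
  \big[minn/d]_(i <- r | P i) F i <= d.
Proof.
elim: r => [|i r IH]; rewrite ?big_nil ?big_cons //.
by case: ifP => // _; rewrite geq_min IH orbT.
Qed.

Lemma big_selective (T : Type) (I : eqType) (op : T -> T -> T) (d : T)
    (r : seq I) (P : pred I) (F : I -> T) :
  (forall x y, op x y = x \/ op x y = y) ->
  \big[op/d]_(i <- r | P i) F i = d \/
  exists2 i, (i \in r) && P i & \big[op/d]_(i <- r | P i) F i = F i.
Proof.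
move=> opxy; rewrite big_seq_cond; elim/big_ind: _ => [|x y Kx Ky|i ri].
- by left.
- by case: (opxy x y) => ->.
- by right; exists i.
Qed.

Lemma bigmin_attained (I : eqType) (r : seq I) (P : pred I) (F : I -> nat) d :
  \big[minn/d]_(i <- r | P i) F i = d \/
  exists2 i, (i \in r) && P i & \big[minn/d]_(i <- r | P i) F i = F i.
Proof. by apply: big_selective => x y; rewrite /minn; case: ltnP; [left|right]. Qed.

Lemma bigmax_attained (I : eqType) (r : seq I) (P : pred I) (F : I -> nat) :
  \max_(i <- r | P i) F i = 0 \/
  exists2 i, (i \in r) && P i & \max_(i <- r | P i) F i = F i.
Proof. by apply: big_selective => x y; rewrite /maxn; case: ltnP; [right|left]. Qed.

Lemma sorted_leq_last (a : nat) (l : seq nat) :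
  sorted leq (a :: l) -> forall z, z \in a :: l -> z <= last a l.
Proof.
elim: l a => [|c l IH] a /=; first by move=> _ z; rewrite inE => /eqP->.
move=> /andP[ac pl] z; rewrite inE => /orP[/eqP->|zl]; last exact: IH.
by apply: leq_trans ac _; apply: IH => //; exact: mem_head.
Qed.

Lemma ltn_sum_cond (I : finType) (P : pred I) (F G : I -> nat) i0 :
  (forall i, P i -> F i <= G i) -> P i0 -> F i0 < G i0 ->
  \sum_(i | P i) F i < \sum_(i | P i) G i.
Proof.
move=> FG Pi0 lt0; rewrite (bigD1 i0) // [X in _ < X](bigD1 i0) //= -addSn.
by apply: leq_add => //; apply: leq_sum => i /andP[Pi _]; apply: FG.
Qed.

(** * Carrels *)

Section Carrels.
Variables (n : nat) (lam : seq nat).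

Local Notation inR := (inR n lam).
Local Notation clo := (clo n lam).
Local Notation chi := (chi n lam).

Lemma inR_range q : inR q -> 1 <= q < n.
Proof. by case/and3P=> -> ->. Qed.

Lemma chi_range i : i <= n -> i <= chi i <= n.
Proof.
move=> iN; rewrite /chi bigmin_leq_id andbT.
by apply: leq_bigmin_seq => // q; rewrite mem_index_iota => /andP[].
Qed.

Lemma chi_inR i : chi i < n -> inR (chi i).
Proof.
by rewrite /chi; have [->|[q /andP[_ Rq] ->]] := bigmin_attained (index_iota i n) inR id n;
  rewrite ?ltnn.
Qed.

Lemma notin_R_below_chi i q : i <= q < chi i -> ~~ inR q.
Proof.
move=> /andP[iq qc]; apply/negP=> Rq; have /andP[_ qn] := inR_range Rq.
have : chi i <= q by apply: geq_bigmin_seq; rewrite // mem_index_iota iq qn.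
by rewrite leqNgt qc.
Qed.

Lemma chi_unique i v : i <= v <= n -> (v < n -> inR v) ->
  (forall q, i <= q < v -> ~~ inR q) -> chi i = v.
Proof.
move=> /andP[iv vn] Rv noR; have /andP[ic cn] := chi_range (leq_trans iv vn).
case: (ltngtP (chi i) v) => // h.
- by have := noR _ (introT andP (conj ic h)); rewrite chi_inR //; lia.
- by have := @notin_R_below_chi i v; rewrite iv h Rv //; lia.
Qed.

Lemma clo_lt i : 1 <= i -> clo i < i.
Proof.
move=> i1; rewrite /clo.
have [->|[q /andP[]]] := bigmax_attained (index_iota 0 i) inR id => //.
by rewrite mem_index_iota => /andP[_ qi] _ ->.
Qed.

Lemma clo_inR i : 0 < clo i -> inR (clo i).
Proof.
by rewrite /clo; have [->|[q /andP[_ Rq] ->]] := bigmax_attained (index_iota 0 i) inR id.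
Qed.

Lemma notin_R_above_clo i q : clo i < q < i -> ~~ inR q.
Proof.
move=> /andP[cq qi]; apply/negP=> Rq.
have : q <= clo i by apply: (leq_bigmax_seq q) => //; rewrite mem_index_iota.
by rewrite leqNgt cq.
Qed.

Lemma clo_unique i v : v < i -> (0 < v -> inR v) ->
  (forall q, v < q < i -> ~~ inR q) -> clo i = v.
Proof.
move=> vi Rv noR; have ci := clo_lt (leq_ltn_trans (leq0n v) vi).
case: (ltngtP (clo i) v) => // h.
- by have := @notin_R_above_clo i v; rewrite vi h Rv //; lia.
- by have := noR _ (introT andP (conj h ci)); rewrite clo_inR //; lia.
Qed.

Lemma carrel_eq i r : 1 <= i <= n -> clo i < r <= chi i ->
  clo r = clo i /\ chi r = chi i.
Proof.
move=> /andP[i1 iN] /andP[cr rc]; have /andP[ic cn] := chi_range iN.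
have ci := clo_lt i1.
split.
- apply: clo_unique => [|/clo_inR //|q /andP[cq qr]]; first lia.
  case: (ltnP q i) => qi; first by apply: (@notin_R_above_clo i); rewrite cq qi.
  by apply: (@notin_R_below_chi i); rewrite qi; lia.
- apply: chi_unique => [|/chi_inR //|q /andP[rq qc]]; first lia.
  case: (ltnP q i) => qi; last by apply: (@notin_R_below_chi i); rewrite qi qc.
  by apply: (@notin_R_above_clo i); rewrite qi; lia.
Qed.

End Carrels.

Section Partition.
Variables (n : nat) (lam : seq nat).
Hypothesis lamP : is_partition n lam.

Lemma partition_nth_nonincr a b : a <= b -> nth 0 lam b <= nth 0 lam a.
Proof.
case/andP: lamP => /eqP sz so ab.
case: (ltnP b (size lam)) => hb; last by rewrite nth_default.
have geq_trans : transitive geq by move=> x y z /= yx zy; apply: leq_trans zy yx.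
by apply: (sorted_leq_nth geq_trans (@leqnn)) => //; rewrite inE; lia.
Qed.

Lemma partition_ent_nonincr a b : 1 <= a <= b -> ent lam b <= ent lam a.
Proof. by move=> ab; apply: partition_nth_nonincr; lia. Qed.

Lemma partition_const_carrel i r : 1 <= i <= n -> i <= r <= chi n lam i ->
  ent lam r = ent lam i.
Proof.
move=> /andP[i1 iN]; elim: r => [|r IH] /andP[ir rc]; first lia.
case: (ltngtP i r.+1) => [ir1||->] //; last lia.
have r1 : 1 <= r by lia.
have := @notin_R_below_chi n lam i r; rewrite /inR r1 -ltnS ir1 rc.
have := IH (introT andP (conj ir1 (ltnW rc))).
have := partition_ent_nonincr (introT andP (conj r1 (leqnSn r))).
have := chi_range lam iN; lia.
Qed.

Lemma chi_empty_row i : 1 <= i <= n -> ent lam i = 0 -> chi n lam i = n.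
Proof.
move=> iN lam0; apply: chi_unique => [||q /andP[iq qn]]; [lia|by rewrite ltnn|].
apply/negP=> /and3P[q1 _]; have := @partition_ent_nonincr i q; rewrite lam0; lia.
Qed.

End Partition.

(** * Critical lists *)

(* [steep b x y] is the paper's condition beta_x - beta_y > x - y. *)
Definition steep (b : seq nat) (x y : nat) : bool := x + ent b y < ent b x + y.

Section CriticalList.
Variables (b : seq nat) (lo : nat).

Lemma next_critP x :
  match next_crit b lo x with
  | Some y => [/\ lo < y < x, steep b x y & forall z, y < z < x -> ~~ steep b x z]
  | None => forall z, lo < z < x -> ~~ steep b x z
  end.
Proof.
rewrite /next_crit.
set c := [seq y <- _ | _].
have memc z : (z \in c) = (lo < z < x) && steep b x z.
  by rewrite mem_filter mem_iota /steep andbC; congr (_ && _); lia.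
have : sorted leq c by apply: sorted_filter; [exact: leq_trans|exact: iota_sorted].
clearbody c; case: c memc => [|a l] memc sorted_c.
  by move=> z zr; apply/negP=> sz; have := memc z; rewrite zr sz.
have := memc (last a l); rewrite mem_last => /esym/andP[r v].
split=> // z /= zr; apply/negP=> sz.
have : z \in a :: l by rewrite memc sz andbT; lia.
by move/(sorted_leq_last sorted_c); lia.
Qed.

Lemma next_crit_eq x (y : option nat) :
  (if y is Some y then lo < y < x else true) ->
  (forall z, lo < z < x -> steep b x z = (if y is Some y then z <= y else false)) ->
  next_crit b lo x = y.
Proof.
move=> y_range y_steep; have := next_critP x.
case: (next_crit b lo x) => [y'|] => [[/andP[loy yx] sy' flat]|flat].
- case: y y_range y_steep => [y /andP[loy2 yx2]|_] y_steep; last first.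
    by have := y_steep y'; rewrite sy' loy yx => /(_ isT).
  have := y_steep y'; rewrite sy' loy yx => /(_ isT) /esym y'y.
  suff : y <= y' by move=> yy'; congr Some; lia.
  rewrite leqNgt; apply/negP=> lt.
  by have := flat y (introT andP (conj lt yx2)); rewrite y_steep ?leqnn // loy2.
- case: y y_range y_steep => [y /andP[loy2 yx2]|_] y_steep //.
  by have := flat y (introT andP (conj loy2 yx2)); rewrite y_steep ?leqnn // loy2.
Qed.

Local Notation s x f := (crit_from b lo x f).

Lemma crit_fromP f x : lo < x -> x <= f ->
  [/\ forall c, c \in s x f -> lo < c <= x,
      x \in s x f,
      forall c y, c \in s x f -> next_crit b lo c = Some y ->
        y \in s x f /\ (forall d, d \in s x f -> d < c -> d <= y)
    & forall c, c \in s x f -> next_crit b lo c = None ->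
        forall d, d \in s x f -> c <= d].
Proof.
elim: f x => [|f IH] x lox xf; first lia.
rewrite /=; have := next_critP x.
case N: (next_crit b lo x) => [y|] => [[/andP[loy yx] _ _]|_]; last first.
  split=> [c||c y'|c]; rewrite ?inE ?eqxx //.
  - by move=> /eqP->; lia.
  - by move=> /eqP->; rewrite N.
  - by move=> /eqP-> _ d; rewrite inE => /eqP->.
have [range top next bottom] := IH y loy (ltnSE (leq_trans yx xf)).
split.
- by move=> c; rewrite inE => /orP[/eqP->|/range]; lia.
- exact: mem_head.
- move=> c y'; rewrite inE => /orP[/eqP->|cs].
  + rewrite N => -[<-]; split; first by rewrite inE top orbT.
    by move=> d; rewrite inE => /orP[/eqP->|/range]; lia.
  + move=> Ny'; have [y's below] := next c y' cs Ny'.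
    split=> [|d]; first by rewrite inE y's orbT.
    rewrite inE => /orP[/eqP->|ds] dc; last exact: below.
    by have := range c cs; lia.
- move=> c; rewrite inE => /orP[/eqP->|cs]; first by rewrite N.
  move=> Nc d; rewrite inE => /orP[/eqP->|ds]; last exact: bottom.
  by have := range c cs; lia.
Qed.

Lemma crit_from_ext b' f x :
  (forall c, c \in crit_from b lo x f -> next_crit b' lo c = next_crit b lo c) ->
  crit_from b' lo x f = crit_from b lo x f.
Proof.
elim: f x => [|f IH] x same //=.
rewrite same ?mem_head //; case N: (next_crit b lo x) => [y|] //.
by congr (_ :: _); apply: IH => c cs; apply: same; rewrite /= N inE cs orbT.
Qed.

End CriticalList.

Definition crit_above (b : seq nat) (lo hi i : nat) : nat :=
  \big[minn/hi]_(c <- crit b lo hi | i <= c) c.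

Section CarrelCriticalList.
Variables (b : seq nat) (lo hi : nat).
Hypothesis lo_lt_hi : lo < hi.

Local Notation C := (crit b lo hi).
Local Notation above := (crit_above b lo hi).

Let critP := @crit_fromP b lo hi hi lo_lt_hi (leqnn hi).

Lemma crit_range c : c \in C -> lo < c <= hi.
Proof. by case: critP => range _ _ _; apply: range. Qed.

Lemma crit_top : hi \in C.
Proof. by case: critP. Qed.

Lemma crit_next c y : c \in C -> next_crit b lo c = Some y ->
  y \in C /\ forall d, d \in C -> d < c -> d <= y.
Proof. by case: critP => _ _ next _; apply: next. Qed.

Lemma crit_bottom c : c \in C -> next_crit b lo c = None -> forall d, d \in C -> c <= d.
Proof. by case: critP => _ _ _ bottom; apply: bottom. Qed.

Lemma crit_steep c d : c \in C -> d \in C -> d < c -> steep b c d.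
Proof.
elim/ltn_ind: c d => c IH d cs ds dc; have := next_critP b lo c.
case N: (next_crit b lo c) => [y|] => [[/andP[_ yc] scy _]|_]; last first.
  by have := crit_bottom cs N ds; lia.
have [ys below] := crit_next cs N.
have := below d ds dc; rewrite leq_eqVlt => /orP[/eqP->//|dy].
by have := IH y yc d ys ds dy; move: scy; rewrite /steep; lia.
Qed.

Lemma crit_above_mem i : above i \in C.
Proof.
rewrite /crit_above.
by have [->|[c /andP[cs _] ->]] := bigmin_attained C (fun c => i <= c) id hi; rewrite ?crit_top.
Qed.

Lemma crit_above_min i c : c \in C -> i <= c -> above i <= c.
Proof. exact: geq_bigmin_seq. Qed.

Lemma crit_above_range i : i <= hi -> i <= above i <= hi.
Proof. by move=> ihi; rewrite /crit_above bigmin_leq_id andbT; apply: leq_bigmin_seq. Qed.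

Lemma crit_above_flat i z : lo < i -> i <= z < above i -> ~~ steep b (above i) z.
Proof.
move=> loi /andP[iz zm]; have := next_critP b lo (above i).
case N: (next_crit b lo (above i)) => [y|] => [[/andP[loy ym] _ flat]|flat].
- have [ys _] := crit_next (crit_above_mem i) N.
  case: (leqP i y) => iy; first by have := crit_above_min ys iy; lia.
  by apply: flat; lia.
- by apply: flat; lia.
Qed.

Lemma crit_above_crit c : c \in C -> above c = c.
Proof.
move=> cs; have /andP[_ c_hi] := crit_range cs.
by apply/eqP; rewrite eqn_leq crit_above_min //; case/andP: (crit_above_range c_hi).
Qed.

Lemma crit_above_succ i : i < hi ->
  above i = above i.+1 \/ (above i = i /\ steep b (above i.+1) i).
Proof.
move=> ihi; have /andP[im _] := crit_above_range (ltnW ihi).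
have /andP[im' _] := crit_above_range ihi.
have mm' : above i <= above i.+1 by apply: crit_above_min (crit_above_mem _) _; lia.
case: (ltngtP (above i) (above i.+1)) mm' => // lt _; last by left.
have mi : above i = i.
  case: (ltnP i (above i)) => [lt_i|]; last lia.
  by have := crit_above_min (crit_above_mem i) lt_i; lia.
right; split=> //; have := next_critP b lo (above i.+1).
case N: (next_crit b lo (above i.+1)) => [y|] => [[/andP[_ ym] v _]|_].
- have [ys below] := crit_next (crit_above_mem i.+1) N.
  have := below _ (crit_above_mem i) lt.
  case: (leqP i.+1 y) => iy; first by have := crit_above_min ys iy; lia.
  rewrite mi => iy'; have e : y = i by lia.
  by rewrite e in v.
- by have := crit_bottom (crit_above_mem i.+1) N (crit_above_mem i); lia.
Qed.

End CarrelCriticalList.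

(** * The core *)

Lemma mem_carrel n lam i : 1 <= i <= n -> clo n lam i < i <= chi n lam i.
Proof. by case/andP=> i1 iN; rewrite clo_lt //; case/andP: (chi_range lam iN). Qed.

Lemma carrel_nonempty n lam i : 1 <= i <= n -> clo n lam i < chi n lam i.
Proof. by move/(mem_carrel lam)/andP=> [/leq_trans]; apply. Qed.

Lemma ent_platform n lam b i : 1 <= i <= n ->
  ent (platform n lam b) i = ent b (xcrit n lam b i).
Proof.
move=> iN; rewrite /ent /platform (nth_map 0) ?size_iota ?nth_iota; try lia.
by rewrite add1n prednK //; case/andP: iN.
Qed.

Section Core.
Variables (n : nat) (lam b : seq nat).
Hypothesis b_upper : upper n b.

Local Notation clo := (clo n lam).
Local Notation chi := (chi n lam).
Local Notation xcrit := (xcrit n lam b).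
Local Notation core := (core n lam b).

Let b_range i : 1 <= i <= n -> i <= ent b i <= n.
Proof. by case: b_upper => _; apply. Qed.

Lemma ent_core i : 1 <= i <= n -> ent core i = ent b (xcrit i) - (xcrit i - i).
Proof.
move=> iN; rewrite /ent /core (nth_map 0) ?size_iota ?nth_iota; try lia.
by rewrite add1n prednK //; case/andP: iN.
Qed.

Lemma xcritE i : xcrit i = crit_above b (clo i) (chi i) i.
Proof. by []. Qed.

Lemma xcrit_carrel i z : 1 <= i <= n -> clo i < z <= chi i ->
  xcrit z = crit_above b (clo i) (chi i) z.
Proof. by move=> iN zc; rewrite /xcrit; have [-> ->] := carrel_eq iN zc. Qed.

Section InCarrel.
Variable i : nat.
Hypothesis iN : 1 <= i <= n.

Local Notation lo := (clo i).
Local Notation C := (crit b (clo i) (chi i)).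

Let carrel_i := mem_carrel lam iN.
Let lo_lt_hi := carrel_nonempty lam iN.

Lemma xcrit_mem : xcrit i \in crit b (clo i) (chi i).
Proof. exact: crit_above_mem. Qed.

Lemma xcrit_range : i <= xcrit i <= chi i.
Proof. by apply: crit_above_range; case/andP: carrel_i. Qed.

Lemma xcrit_flat z : i <= z < xcrit i -> ~~ steep b (xcrit i) z.
Proof. by apply: crit_above_flat; case/andP: carrel_i. Qed.

Lemma xcrit_crit c : c \in crit b (clo i) (chi i) -> xcrit c = c.
Proof.
by move=> cs; rewrite (xcrit_carrel iN (crit_range lo_lt_hi cs)) crit_above_crit.
Qed.

Lemma xcrit_lt_crit c z : c \in C -> lo < z < c ->
  (xcrit z < c) = (if next_crit b lo c is Some y then z <= y else false).
Proof.
move=> cs /andP[lz zc]; have /andP[_ ch] := crit_range lo_lt_hi cs.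
have z_in : lo < z <= chi i by lia.
rewrite (xcrit_carrel iN z_in).
have /andP[zm _] := crit_above_range b lo (leq_trans (ltnW zc) ch).
have mc : crit_above b lo (chi i) z <= c by apply: crit_above_min; lia.
have ms := crit_above_mem b lo_lt_hi z.
case N: (next_crit b lo c) => [y|]; last by have := crit_bottom lo_lt_hi cs N ms; lia.
have [ys below] := crit_next lo_lt_hi cs N.
have /andP[_ yc] : lo < y < c by have := next_critP b lo c; rewrite N => -[].
case: (leqP z y) => zy; first by have := crit_above_min ys zy; lia.
by apply/negbTE; rewrite -leqNgt; case: ltngtP mc => // /(below _ ms); lia.
Qed.

Lemma steep_core_crit c z : c \in C -> lo < z < c -> steep core c z = (xcrit z < c).
Proof.
move=> cs /andP[lz zc]; have /andP[lc ch] := crit_range lo_lt_hi cs.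
have /andP[_ cn] := chi_range lam (proj2 (andP iN)).
have z_in : lo < z <= chi i by lia.
have zN : 1 <= z <= n by lia.
rewrite /steep ent_core ?ent_core ?(xcrit_crit cs) ?subnn ?subn0 //; last lia.
rewrite (xcrit_carrel iN z_in).
set m := crit_above b lo (chi i) z.
have ms : m \in C := crit_above_mem b lo_lt_hi z.
have /andP[zm _] := crit_above_range b lo (leq_trans (ltnW zc) ch).
have mN : 1 <= m <= n by have /crit_range/andP[] := ms; lia.
have := b_range mN; case: (ltngtP m c) => [lt|gt|->] bm; last lia.
- by have := crit_steep lo_lt_hi cs ms lt; rewrite /steep; lia.
- by have := crit_above_min cs (ltnW zc); lia.
Qed.

Lemma crit_core : crit core lo (chi i) = C.
Proof.
apply: crit_from_ext => c cs; apply: next_crit_eq => [|z zc].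
  by have := next_critP b lo c; case: (next_crit b lo c) => // y [].
by rewrite (steep_core_crit cs zc) (xcrit_lt_crit cs zc).
Qed.

End InCarrel.

Lemma core_upper : upper n core.
Proof.
split=> [|i iN]; first by rewrite size_map size_iota.
rewrite ent_core //; have /andP[im mc] := xcrit_range iN.
have /andP[_ cn] := chi_range lam (proj2 (andP iN)).
have := b_range (_ : 1 <= xcrit i <= n); lia.
Qed.

Lemma core_le i : 1 <= i <= n -> ent core i <= ent b i.
Proof.
move=> iN; rewrite ent_core //; have /andP[im _] := xcrit_range iN.
case: (ltngtP i (xcrit i)) im => // [lt|<-] _; last by rewrite subnn subn0.
by have := xcrit_flat iN (introT andP (conj (leqnn i) lt)); rewrite /steep; lia.
Qed.

Lemma core_incr i : 1 <= i < n -> chi i = chi i.+1 -> ent core i < ent core i.+1.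
Proof.
move=> /andP[i1 iN] chi_eq; have iN' : 1 <= i <= n by lia.
have i1N : 1 <= i.+1 <= n by lia.
have /andP[ci _] := mem_carrel lam iN'.
have /andP[_ i1c] := mem_carrel lam i1N; rewrite -chi_eq in i1c.
have i1_in : clo i < i.+1 <= chi i by lia.
rewrite !ent_core // xcritE (xcrit_carrel iN' i1_in).
have /andP[im _] := crit_above_range b (clo i) (ltnW i1c).
have /andP[im' mc'] := crit_above_range b (clo i) i1c.
have /andP[_ cn] := chi_range lam (ltnW iN).
have := b_range (_ : 1 <= crit_above b (clo i) (chi i) i.+1 <= n).
case: (crit_above_succ b (carrel_nonempty lam iN') i1c) => [-> | [-> steep_i]]; first lia.
by move: steep_i; rewrite /steep; lia.
Qed.

Lemma xcrit_core i : 1 <= i <= n -> Defs.xcrit n lam core i = xcrit i.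
Proof. by move=> iN; rewrite /Defs.xcrit crit_core. Qed.

Lemma core_crit i c : 1 <= i <= n -> c \in crit b (clo i) (chi i) -> ent core c = ent b c.
Proof.
move=> iN cs; have /andP[_ cn] := chi_range lam (proj2 (andP iN)).
have /andP[lc ch] := crit_range (carrel_nonempty lam iN) cs.
by rewrite ent_core ?(xcrit_crit iN cs) ?subnn ?subn0 //; lia.
Qed.

Lemma core_UBP : UBP n lam core.
Proof.
split=> [|i iN]; first exact: core_upper.
rewrite ent_platform // xcrit_core // (core_crit iN (xcrit_mem iN)).
by rewrite ent_core // leq_subr.
Qed.

Lemma core_flag : flag_crit n lam b -> flag_crit n lam core.
Proof.
move=> flag q Rq; have /andP[q1 qn] := inR_range Rq.
have qN : 1 <= q <= n by lia.
have q1N : 1 <= q.+1 <= n by lia.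
have clo_q1 : clo q.+1 = q by apply: clo_unique => // q' /andP[]; lia.
have chi_q : chi q = q by apply: chi_unique => [||q' /andP[]]; [lia|move=> _; exact: Rq|lia].
have lo_lt_hi : q < chi q.+1 by case/andP: (mem_carrel lam q1N); rewrite clo_q1.
have crit_eq : crit core q (chi q.+1) = crit b q (chi q.+1).
  by rewrite -{1}clo_q1 crit_core // clo_q1.
move: (flag q Rq); rewrite crit_eq; set C := crit b q (chi q.+1).
have ks : \big[minn/n]_(c <- C) c \in C.
  have k_le := @geq_bigmin_seq _ _ (fun=> true) id n _ (crit_top b lo_lt_hi) isT.
  move: k_le; have [->|[c /andP[cs _] -> //]] := bigmin_attained C (fun=> true) id n.
  have /andP[_ cn] := chi_range lam q1N.
  by move=> n_le; rewrite {1}(_ : n = chi q.+1) ?crit_top //; lia.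
have qs : q \in crit b (clo q) (chi q) by rewrite chi_q crit_top // clo_lt.
by rewrite (core_crit qN qs) (core_crit q1N) // clo_q1.
Qed.

End Core.

(** * Tableaux bounded by a flag *)

Section Tableaux.
Variables (n : nat) (lam : seq nat).
Hypothesis lamP : is_partition n lam.

Local Notation cell := ('I_n * 'I_(ncols lam))%type.
Local Notation tableau := {ffun cell -> 'I_n.+1}.

Lemma indiag_up (a b : nat) j : a <= b -> indiag lam b j -> indiag lam a j.
Proof. by move=> /(partition_nth_nonincr lamP) ba /leq_trans; apply. Qed.

Lemma row_le_ncols a : nth 0 lam a <= ncols lam.
Proof. exact: (partition_nth_nonincr lamP (leq0n a)). Qed.

Section Semistandard.
Variables (b : seq nat) (T : tableau).
Hypothesis T_ssyt : ssyt n lam b T.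

Lemma ssyt_bound (c : cell) : indiag lam c.1 c.2 -> 1 <= T c <= nth 0 b c.1.
Proof. by move=> c_in; case/and3P: T_ssyt => /forallP /(_ c); rewrite c_in. Qed.

Lemma ssyt_out (c : cell) : ~~ indiag lam c.1 c.2 -> T c = ord0.
Proof. by move=> /negbTE c_out; case/and3P: T_ssyt => /forallP /(_ c); rewrite c_out => /eqP. Qed.

Lemma ssyt_col (i1 i2 : 'I_n) (j : 'I_(ncols lam)) :
  i1 < i2 -> indiag lam i2 j -> T (i1, j) < T (i2, j).
Proof.
move=> i12 c_in; case/and3P: T_ssyt => _ _ /forallP /(_ i1) /forallP /(_ i2) /forallP /(_ j).
by rewrite i12 c_in.
Qed.

Lemma ssyt_col_gap (j : 'I_(ncols lam)) d (a c : 'I_n) : c = a + d :> nat ->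
  indiag lam c j -> T (a, j) + d <= T (c, j).
Proof.
elim: d c => [|d IH] c cad c_in.
  have -> : c = a by apply: val_inj; rewrite /= cad addn0.
  by rewrite addn0.
have ad_lt : a + d < n by have := ltn_ord c; lia.
have := IH (Ordinal ad_lt) erefl (indiag_up (_ : a + d <= c) c_in).
have := ssyt_col (i1 := Ordinal ad_lt) (_ : a + d < c) c_in; rewrite /=; lia.
Qed.

Lemma ssyt_ge_row (c : cell) : indiag lam c.1 c.2 -> c.1.+1 <= T c.
Proof.
case: c => a j /= c_in; have n_gt0 : 0 < n by have := ltn_ord a; lia.
have := ssyt_col_gap (a := Ordinal n_gt0) erefl c_in.
have := ssyt_bound (c := (Ordinal n_gt0, j)) (indiag_up (leq0n a) c_in); rewrite /=; lia.
Qed.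

End Semistandard.

Lemma ssyt_core b T : ssyt n lam b T -> ssyt n lam (core n lam b) T.
Proof.
move=> TP; case/and3P: (TP) => _ rows cols; apply/and3P; split=> //.
apply/forallP=> -[a j] /=; case: ifP => c_in; last by rewrite (ssyt_out TP) ?c_in.
have /andP[T1 _] := ssyt_bound TP (c := (a, j)) c_in; rewrite T1 /=.
have rN : 1 <= a.+1 <= n by have := ltn_ord a; lia.
rewrite -[nth 0 _ a]/(ent _ a.+1) ent_core //.
have /andP[rm mc] := xcrit_range lam b rN.
have /andP[_ cn] := chi_range lam (proj2 (andP rN)).
set m := xcrit n lam b a.+1 in rm mc *.
have m_lt : m.-1 < n by lia.
have cell_m : indiag lam (Ordinal m_lt) j.
  rewrite /indiag -[nth 0 lam _]/(ent lam m) (partition_const_carrel lamP rN) ?rm //.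
have := ssyt_col_gap TP (a := a) (c := Ordinal m_lt) (d := m - a.+1) _ cell_m.
have := ssyt_bound TP (c := (Ordinal m_lt, j)) cell_m.
rewrite /= -[nth 0 b m.-1]/(ent b m); lia.
Qed.

Lemma ssyt_of_core b T : ssyt n lam (core n lam b) T -> ssyt n lam b T.
Proof.
move=> TP; case/and3P: (TP) => _ rows cols; apply/and3P; split=> //.
apply/forallP=> c; case: ifP => c_in; last by rewrite (ssyt_out TP) ?c_in.
have /andP[-> Tb] := ssyt_bound TP c_in; apply: leq_trans Tb _.
by apply: (core_le lam b (i := c.1.+1)); have := ltn_ord c.1; lia.
Qed.

Lemma schur_core b : schur n lam (core n lam b) = schur n lam b.
Proof. by apply: eq_bigl => T; apply/idP/idP; [apply: ssyt_of_core|apply: ssyt_core]. Qed.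

End Tableaux.

(** * A carrel-increasing flag is determined by its Schur function *)

Definition carrel_increasing (n : nat) (lam g : seq nat) : Prop :=
  forall k, 1 <= k < n -> chi n lam k = chi n lam k.+1 -> ent g k < ent g k.+1.

Lemma carrel_increasing_core n lam b : upper n b ->
  carrel_increasing n lam (core n lam b).
Proof. by move=> bP k; apply: core_incr. Qed.

Lemma carrel_increasing_gap n lam g i r : carrel_increasing n lam g ->
  1 <= i <= n -> i <= r <= chi n lam i -> ent g i + (r - i) <= ent g r.
Proof.
move=> g_incr iN; have /andP[ci ic] := mem_carrel lam iN.
have /andP[_ cn] := chi_range lam (proj2 (andP iN)).
elim: r => [|r IH] /andP[ir rc]; first lia.
move: ir; rewrite leq_eqVlt => /orP[/eqP<-|ir1]; first by rewrite subnn addn0.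
have r_c : clo n lam i < r <= chi n lam i by lia.
have r1_c : clo n lam i < r.+1 <= chi n lam i by lia.
have [[_ chi_r] [_ chi_r1]] := (carrel_eq iN r_c, carrel_eq iN r1_c).
have r_in : 1 <= r < n by lia.
have := g_incr r r_in; rewrite chi_r chi_r1 => /(_ erefl).
have := IH (introT andP (conj ir1 (ltnW rc))); lia.
Qed.

Section Content.
Variables (n : nat) (lam : seq nat).

Local Notation cell := ('I_n * 'I_(ncols lam))%type.
Local Notation tableau := {ffun cell -> 'I_n.+1}.

Definition content (T : tableau) : 'X_{1..n} := [multinom theta n lam T k | k < n].

Lemma mcoeff_schur b m :
  mcoeff m (schur n lam b) = (\sum_(T | ssyt n lam b T) (content T == m))%:R%R.
Proof.
rewrite /schur raddf_sum /= natr_sum; apply: eq_bigr => T _.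
rewrite (_ : (\prod_(k < n) 'X_k ^+ theta n lam T k)%R = 'X_[content T]) ?mcoeffX //.
by rewrite mpolyXE_id; apply: eq_bigr => k _; rewrite mnmE.
Qed.

Lemma schur_eq_content b b' T : schur n lam b = schur n lam b' -> ssyt n lam b T ->
  exists2 S, ssyt n lam b' S & forall k, theta n lam S k = theta n lam T k.
Proof.
move=> schur_eq T_ssyt.
have := congr1 (mcoeff (content T)) schur_eq; rewrite !mcoeff_schur => /eqP.
rewrite eqr_nat => /eqP count_eq.
have : 0 < \sum_(S | ssyt n lam b' S) (content S == content T).
  by rewrite -count_eq (bigD1 T) //= eqxx.
case: (pickP (fun S => ssyt n lam b' S && (content S == content T))) => [S|none].
  case/andP=> S_ssyt /eqP e; exists S => // k.
  by have := congr1 (fun m : 'X_{1..n} => m k) e; rewrite /= !mnmE.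
by rewrite big1 // => S S_ssyt; have := none S; rewrite S_ssyt /= => ->.
Qed.

Lemma sum_cells_content b (T : tableau) (f : nat -> nat) : ssyt n lam b T ->
  \sum_(c : cell | indiag lam c.1 c.2) f (T c) = \sum_(k < n) f k.+1 * theta n lam T k.
Proof.
move=> T_ssyt.
have thetaE k : theta n lam T k =
    \sum_(c : cell | indiag lam c.1 c.2 && (T c == k.+1 :> nat)) 1.
  by rewrite /theta -sum1_card; apply: eq_bigl => c; rewrite inE.
symmetry; under eq_bigr => k _ do rewrite thetaE big_distrr /= muln1 big_mkcond /=.
rewrite exchange_big /= [RHS]big_mkcond /=; apply: eq_bigr => c _.
case: ifP => c_in /=; last by rewrite big1 // => k _; rewrite c_in.
have /andP[T1 _] := ssyt_bound T_ssyt c_in.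
have k_lt : (T c).-1 < n by have := ltn_ord (T c); lia.
rewrite (bigD1 (Ordinal k_lt)) //= prednK // eqxx big1 ?addn0 // => k k_ne.
case: eqP => // Tk; case/eqP: k_ne; apply: val_inj => /=; lia.
Qed.

End Content.

Section ExtremalTableau.
Variables (n : nat) (lam g : seq nat).
Hypothesis g_upper : upper n g.

Local Notation cell := ('I_n * 'I_(ncols lam))%type.

Let g_range r : 1 <= r <= n -> r <= ent g r <= n.
Proof. by case: g_upper => _; apply. Qed.

(* The largest entry that column strictness and the flag [g] allow in row [r]
   (counted from 1) and column [j] of a tableau of shape [lam]. *)
Definition cap (r j : nat) : nat :=
  \big[minn/ent g r]_(r <= r' < n.+1 | j < ent lam r') (ent g r' - (r' - r)).

Lemma cap_le r j : cap r j <= ent g r.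
Proof. exact: bigmin_leq_id. Qed.

Lemma cap_ge r j : 1 <= r <= n -> r <= cap r j.
Proof.
move=> rN; apply: leq_bigmin_seq => [|r']; first by have := g_range rN; lia.
by rewrite mem_index_iota => r_r' _; have := g_range (_ : 1 <= r' <= n); lia.
Qed.

Lemma cap_row r j1 j2 : j1 <= j2 -> cap r j1 <= cap r j2.
Proof.
move=> j12; apply: leq_bigmin_seq => [|r' r_r' j2r']; first exact: cap_le.
by apply: geq_bigmin_seq; rewrite // (leq_ltn_trans j12).
Qed.

Lemma cap_col r1 r2 j : 1 <= r1 -> r1 < r2 <= n -> j < ent lam r2 ->
  cap r1 j + (r2 - r1) <= cap r2 j.
Proof.
move=> r1_pos r12 j_in.
have cap_r' r' : r1 <= r' <= n -> j < ent lam r' -> cap r1 j <= ent g r' - (r' - r1).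
  by move=> r'_in j_in'; apply: geq_bigmin_seq; rewrite // mem_index_iota; lia.
apply: leq_bigmin_seq => [|r']; first by have := cap_r' r2; have := g_range (_ : 1 <= r2 <= n); lia.
rewrite mem_index_iota => r'_in j_in'; have := cap_r' r' _ j_in'.
by have := g_range (_ : 1 <= r' <= n); lia.
Qed.

Variable i : nat.
Hypothesis lamP : is_partition n lam.

Definition extremal_entry (r j : nat) : nat :=
  if j < ent lam r then (if r < i then r else cap r j) else 0.

Definition extremal_tableau : {ffun cell -> 'I_n.+1} :=
  [ffun c : cell => inord (extremal_entry c.1.+1 c.2)].

Lemma extremal_tableauE (c : cell) :
  extremal_tableau c = extremal_entry c.1.+1 c.2 :> nat.
Proof.
rewrite ffunE inordK // ltnS /extremal_entry; have := ltn_ord c.1.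
case: ifP => // _; case: ifP => [|_]; first lia.
by have := cap_le c.1.+1 c.2; have := g_range (_ : 1 <= c.1.+1 <= n); lia.
Qed.

Lemma extremal_tableau_in (c : cell) : indiag lam c.1 c.2 ->
  extremal_tableau c = (if c.1.+1 < i then c.1.+1 else cap c.1.+1 c.2) :> nat.
Proof.
by move=> c_in; rewrite extremal_tableauE /extremal_entry (_ : c.2 < ent lam c.1.+1).
Qed.

Lemma extremal_ssyt : ssyt n lam g extremal_tableau.
Proof.
apply/and3P; split.
- apply/forallP=> -[a j]; rewrite /indiag /=.
  have aN : 1 <= a.+1 <= n by have := ltn_ord a; lia.
  case: ifP => c_in; last first.
    by apply/eqP/val_inj; rewrite /= extremal_tableauE /extremal_entry /= c_in.
  rewrite extremal_tableauE /extremal_entry /= c_in -[nth 0 g a]/(ent g a.+1).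
  have := g_range aN; have := cap_ge j aN; have := cap_le a.+1 j; case: ifP; lia.
- apply/forallP=> a; apply/forallP=> j1; apply/forallP=> j2.
  apply/implyP=> /andP[j12 c_in]; rewrite !extremal_tableauE /extremal_entry /=.
  have j2_in : j2 < ent lam a.+1 := c_in.
  rewrite j2_in (leq_ltn_trans j12 j2_in); case: ifP => // _; exact: cap_row.
- apply/forallP=> a1; apply/forallP=> a2; apply/forallP=> j.
  apply/implyP=> /andP[a12 c_in]; rewrite !extremal_tableauE /extremal_entry /=.
  have j_in1 : j < ent lam a1.+1 by apply: (indiag_up lamP (ltnW a12) c_in).
  have j_in2 : j < ent lam a2.+1 := c_in.
  rewrite j_in1 j_in2.
  have a2N : 1 <= a2.+1 <= n by have := ltn_ord a2; lia.
  have := cap_ge j a2N; have := @cap_col a1.+1 a2.+1 j.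
  case: ifP; case: ifP; lia.
Qed.

Hypothesis g_incr : carrel_increasing n lam g.
Hypothesis iN : 1 <= i <= n.

Lemma cap_last : cap i (ent lam i).-1 = ent g i.
Proof.
apply/eqP; rewrite eqn_leq cap_le /=; apply: leq_bigmin_seq => // r'.
rewrite mem_index_iota => /andP[ir' r'n] lam_r'.
have /andP[ic cn] := chi_range lam (proj2 (andP iN)).
case: (leqP r' (chi n lam i)) => r'c.
  by have := carrel_increasing_gap g_incr iN (introT andP (conj ir' r'c)); lia.
have c_lt : chi n lam i < n by lia.
have /and3P[_ _] := chi_inR c_lt.
rewrite (partition_const_carrel lamP iN (introT andP (conj ic (leqnn _)))).
have := partition_ent_nonincr lamP (_ : 1 <= (chi n lam i).+1 <= r'); lia.
Qed.

End ExtremalTableau.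

Section ExtremalComparison.
Variables (n : nat) (lam g g' : seq nat) (i : nat).
Hypothesis lamP : is_partition n lam.
Hypothesis iN : 1 <= i <= n.
Hypothesis g'_le : forall r, i <= r <= n -> ent g' r <= ent g r.

Local Notation cell := ('I_n * 'I_(ncols lam))%type.
Local Notation T := (extremal_tableau n lam g i).

Variable S : {ffun cell -> 'I_n.+1}.
Hypothesis S_ssyt : ssyt n lam g' S.

Lemma ssyt_le_cap (c : cell) : indiag lam c.1 c.2 -> i <= c.1.+1 ->
  S c <= cap n lam g c.1.+1 c.2.
Proof.
case: c => a j /= c_in ia; apply: leq_bigmin_seq => [|r'].
  have := ssyt_bound S_ssyt (c := (a, j)) c_in; have := g'_le (_ : i <= a.+1 <= n).
  by rewrite /ent /=; have := ltn_ord a; lia.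
rewrite mem_index_iota => /andP[ar' r'n] j_in.
have r'_lt : r'.-1 < n by lia.
have r'E : r'.-1 = a + (r' - a.+1) by lia.
have := ssyt_col_gap lamP S_ssyt (a := a) (c := Ordinal r'_lt) r'E j_in.
have := ssyt_bound S_ssyt (c := (Ordinal r'_lt, j)) j_in.
by have := g'_le (_ : i <= r' <= n); rewrite /= -[nth 0 g' r'.-1]/(ent g' r'); lia.
Qed.

Hypothesis g_upper : upper n g.
Hypothesis g_incr : carrel_increasing n lam g.
Hypothesis lam_i : 0 < ent lam i.
Hypothesis same_content : forall k, theta n lam S k = theta n lam T k.

Let sum_eq (f : nat -> nat) :
  \sum_(c : cell | indiag lam c.1 c.2) f (S c) = \sum_(c : cell | indiag lam c.1 c.2) f (T c).
Proof.
rewrite (sum_cells_content f S_ssyt) (sum_cells_content f (extremal_ssyt g_upper i lamP)).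
by apply: eq_bigr => k _; rewrite same_content.
Qed.

(* Both tableaux have the same number of entries [>= i]; in [T] these are
   exactly the cells of rows [>= i], which in [S] are all [>= i] already. *)
Lemma ssyt_upper_rows_lt (c : cell) : indiag lam c.1 c.2 -> c.1.+1 < i -> S c < i.
Proof.
move=> c_in c_up; rewrite ltnNge; apply/negP=> S_ge.
have := sum_eq (fun v => i <= v); apply/eqP; rewrite eq_sym ltn_eqF //.
apply: (ltn_sum_cond (i0 := c)) => [d d_in||]; rewrite ?extremal_tableau_in //=.
- case: ifP => d_up; first by rewrite (leqNgt i) d_up.
  by rewrite (leq_trans _ (ssyt_ge_row lamP S_ssyt d_in)) ?leq_b1 //; lia.
- by case: ifP => [_|]; rewrite S_ge; lia.
Qed.

(* Otherwise [S] is dominated cellwise by [T] in the weight [v * (i <= v)], and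
   strictly in the last cell of row [i], where [T] carries [g_i > g'_i]. *)
Lemma extremal_row_le : ent g i <= ent g' i.
Proof.
rewrite leqNgt; apply/negP=> g'_lt.
have a_lt : i.-1 < n by lia.
have j_lt : (ent lam i).-1 < ncols lam.
  by have := row_le_ncols lamP i.-1; move: lam_i; rewrite /ent; lia.
pose c0 : cell := (Ordinal a_lt, Ordinal j_lt).
have c0_in : indiag lam c0.1 c0.2 by rewrite /indiag /= -[nth 0 lam _]/(ent lam i); lia.
have := sum_eq (fun v => v * (i <= v)); apply/eqP; rewrite ltn_eqF //.
apply: (ltn_sum_cond (i0 := c0)) => [d d_in|//|].
- rewrite extremal_tableau_in //; case: ifP => d_up.
    by rewrite (leqNgt i (S d)) (ssyt_upper_rows_lt d_in d_up) muln0.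
  have d_N : 1 <= d.1.+1 <= n by have := ltn_ord d.1; lia.
  have := cap_ge lam g_upper d.2 d_N; have := ssyt_le_cap d_in.
  by case: leqP; case: leqP; rewrite ?muln1 ?muln0; lia.
- rewrite extremal_tableau_in //= prednK ?ltnn ?cap_last //; last lia.
  have := ssyt_bound S_ssyt c0_in; rewrite /= -[nth 0 g' i.-1]/(ent g' i.-1.+1) prednK; last lia.
  have := g_upper.2 i iN; case: (i <= S c0); case: (i <= ent g i); lia.
Qed.

End ExtremalComparison.

Lemma schur_row_le n lam h h' i : is_partition n lam -> upper n h -> carrel_increasing n lam h ->
  schur n lam h = schur n lam h' -> 1 <= i <= n -> 0 < ent lam i ->
  (forall r, i <= r <= n -> ent h' r <= ent h r) -> ent h i <= ent h' i.
Proof.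
move=> lamP hP h_incr schur_hh' iN lam_i h'_le.
have [S S_ssyt same] := schur_eq_content schur_hh' (extremal_ssyt hP i lamP).
exact: (extremal_row_le lamP iN h'_le S_ssyt hP h_incr lam_i same).
Qed.

Section SchurInjective.
Variables (n : nat) (lam g g' : seq nat).
Hypothesis lamP : is_partition n lam.
Hypotheses (g_upper : upper n g) (g'_upper : upper n g').
Hypotheses (g_incr : carrel_increasing n lam g) (g'_incr : carrel_increasing n lam g').
Hypothesis schur_eq : schur n lam g = schur n lam g'.

Lemma schur_inj_row i : 1 <= i <= n ->
  (forall r, i < r <= n -> ent g r = ent g' r) -> ent g i = ent g' i.
Proof.
move=> iN above; have [gi gn] := andP (g_upper.2 i iN); have [gi' gn'] := andP (g'_upper.2 i iN).
case: (posnP (ent lam i)) => [lam_i|lam_i].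
  (* an empty row lies in the last carrel, where both flags are [r |-> r] *)
  have r_in : i <= n <= chi n lam i by rewrite chi_empty_row //; lia.
  have := carrel_increasing_gap g_incr iN r_in; have := carrel_increasing_gap g'_incr iN r_in.
  have nN : 1 <= n <= n by lia.
  by have := g_upper.2 n nN; have := g'_upper.2 n nN; lia.
case: (ltngtP (ent g i) (ent g' i)) => // lt; exfalso.
- suff : ent g' i <= ent g i by lia.
  apply: schur_row_le lamP g'_upper g'_incr (esym schur_eq) iN lam_i _ => r /andP[ir rn].
  by case: (ltngtP i r) ir => // [ir'|<-] _; [rewrite above ?ir' | exact: ltnW].
- suff : ent g i <= ent g' i by lia.
  apply: schur_row_le lamP g_upper g_incr schur_eq iN lam_i _ => r /andP[ir rn].
  by case: (ltngtP i r) ir => // [ir'|<-] _; [rewrite above ?ir' | exact: ltnW].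
Qed.

Lemma carrel_increasing_schur_inj : g = g'.
Proof.
have eq_from k : forall i, n - i <= k -> 1 <= i <= n -> ent g i = ent g' i.
  elim: k => [|k IH] i ki iN; apply: schur_inj_row => // r rN; first lia.
  by apply: IH; lia.
apply: (@eq_from_nth _ 0) => [|k]; first by rewrite g_upper.1 g'_upper.1.
rewrite g_upper.1 => kn; have := eq_from n k.+1 (leq_subr _ _).
by rewrite /ent /=; apply; lia.
Qed.

End SchurInjective.

(** * The Gessel-Viennot cost *)

Section CompleteHomogeneous.
Variables (n u i : nat).

Definition hpoly_mon (k : nat) (m : 'X_{1..n}) : bool :=
  (mdeg m == u) && [forall l : 'I_n, (m l != 0) ==> (i <= l.+1 <= k)].

Lemma mcoeff_hpoly k m : mcoeff m (hpoly n u i k) = (hpoly_mon k m)%:R%R.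
Proof.
rewrite /hpoly raddf_sum /=; under eq_bigr do rewrite mcoeffX.
case: (boolP (hpoly_mon k m)) => [/andP[/eqP deg_m m_vars]|not_mon].
  have m_lt : mdeg m < u.+1 by rewrite deg_m.
  rewrite (bigD1 (BMultinom m_lt)) /=; last by rewrite deg_m eqxx.
  rewrite eqxx big1 ?addr0 // => m' /andP[_ ne].
  by case: eqP => // e; case/eqP: ne; apply: val_inj.
rewrite big1 // => m' /andP[deg_m' vars_m']; case: eqP => // e.
by case/negP: not_mon; rewrite /hpoly_mon -e deg_m' vars_m'.
Qed.

Lemma mem_msupp_hpoly k m : (m \in msupp (hpoly n u i k)) = hpoly_mon k m.
Proof. by rewrite mcoeff_msupp mcoeff_hpoly pnatr_eq0; case: hpoly_mon. Qed.

Lemma msupp_hpoly_sub k k' : k <= k' ->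
  {subset msupp (hpoly n u i k) <= msupp (hpoly n u i k')}.
Proof.
move=> kk' m; rewrite !mem_msupp_hpoly /hpoly_mon => /andP[-> /forallP vars] /=.
apply/forallP=> l; apply/implyP=> /(implyP (vars l)); lia.
Qed.

Lemma size_msupp_hpoly_mono k k' : k <= k' ->
  size (msupp (hpoly n u i k)) <= size (msupp (hpoly n u i k')).
Proof. by move=> kk'; apply: uniq_leq_size; [exact: msupp_uniq|exact: msupp_hpoly_sub]. Qed.

Lemma size_msupp_hpoly_lt k k' : 1 <= u -> i <= k' <= n -> k < k' ->
  size (msupp (hpoly n u i k)) < size (msupp (hpoly n u i k')).
Proof.
move=> u_pos /andP[ik' k'n] kk'.
have l0_lt : k'.-1 < n by lia.
pose m : 'X_{1..n} := (U_(Ordinal l0_lt) *+ u)%MM.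
have mE l : m l = ((Ordinal l0_lt == l) * u)%N by rewrite mulmnE mnm1E.
have mon_k' : hpoly_mon k' m.
  rewrite /hpoly_mon mdegMn mdeg1 mul1n eqxx /=; apply/forallP=> l; rewrite mE.
  case: (eqVneq (Ordinal l0_lt) l) => [<-|_] /=; rewrite ?mul1n //; apply/implyP; lia.
have not_mon_k : ~~ hpoly_mon k m.
  apply/negP=> /andP[_ /forallP /(_ (Ordinal l0_lt))]; rewrite mE eqxx mul1n /=; lia.
apply: (@uniq_leq_size _ (m :: msupp (hpoly n u i k))).
  by rewrite /= mem_msupp_hpoly not_mon_k msupp_uniq.
move=> x; rewrite inE => /orP[/eqP->|]; first by rewrite mem_msupp_hpoly.
exact: msupp_hpoly_sub (ltnW kk') x.
Qed.

End CompleteHomogeneous.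

Section GesselViennotCost.
Variables (n : nat) (lam : seq nat).

Lemma size_msupp_GVmx_mono b b' (i j : 'I_n) : ent b j.+1 <= ent b' j.+1 ->
  size (msupp (GVmx n lam b i j)) <= size (msupp (GVmx n lam b' i j)).
Proof. by move=> bb'; rewrite !mxE; case: ifP => _; rewrite ?msupp0 ?size_msupp_hpoly_mono. Qed.

(* The entry in row [j + 1], column [j] has degree [lam_j + 1 > 0], so a larger
   flag there strictly enlarges its support. *)
Lemma GVcost_lt b b' j : (forall r, 1 <= r <= n -> ent b r <= ent b' r) ->
  1 <= j < n -> ent b j < ent b' j -> j < ent b' j <= n ->
  GVcost n lam b < GVcost n lam b'.
Proof.
move=> bb' jn lt_j b'_j.
have le_col (c : 'I_n) : ent b c.+1 <= ent b' c.+1 by apply: bb'; have := ltn_ord c; lia.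
have row_lt : j < n by lia.
have col_lt : j.-1 < n by lia.
apply: (ltn_sum_cond (i0 := Ordinal row_lt)) => // [r _|].
  by apply: leq_sum => c _; exact: size_msupp_GVmx_mono.
apply: (ltn_sum_cond (i0 := Ordinal col_lt)) => // [c _|]; first exact: size_msupp_GVmx_mono.
rewrite !mxE /= prednK; last lia.
by case: ifP => [|_]; [lia | apply: size_msupp_hpoly_lt; lia].
Qed.

End GesselViennotCost.

Lemma upper_lt_of_le_neq n s t : upper n s -> upper n t ->
  (forall r, 1 <= r <= n -> ent s r <= ent t r) -> t <> s ->
  exists2 j, 1 <= j < n & ent s j < ent t j.
Proof.
move=> [s_size s_range] [t_size t_range] st ne.
have : has (fun j => ent s j < ent t j) (iota 1 n).
  apply/negPn/negP; rewrite -all_predC => /allP not_lt; apply: ne.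
  apply: (@eq_from_nth _ 0) => [|k]; first by rewrite s_size t_size.
  rewrite t_size => kn; have kN : 1 <= k.+1 <= n by lia.
  have := not_lt k.+1; rewrite mem_iota /= -/(ent t k.+1) -/(ent s k.+1) => /(_ kN).
  by have := st _ kN; lia.
case/hasP=> j; rewrite mem_iota add1n ltnS => jN lt; exists j => //.
by have := s_range j jN; have := t_range j jN; lia.
Qed.

Lemma core_schur_unique n lam b b' : is_partition n lam -> upper n b -> upper n b' ->
  schur n lam b' = schur n lam b -> core n lam b' = core n lam b.
Proof.
move=> lamP bP b'P schur_eq.
apply: (carrel_increasing_schur_inj lamP (core_upper lam b'P) (core_upper lam bP)).
- exact: carrel_increasing_core.
- exact: carrel_increasing_core.
- by rewrite !(schur_core lamP).
Qed.

Lemma GVcost_core_lt n lam b b' : is_partition n lam -> upper n b -> upper n b' ->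
  b' <> core n lam b -> schur n lam b' = schur n lam (core n lam b) ->
  GVcost n lam (core n lam b) < GVcost n lam b'.
Proof.
move=> lamP bP b'P ne schur_eq.
have d_upper := core_upper lam bP.
have core_eq : core n lam b' = core n lam b.
  by apply: core_schur_unique; rewrite // schur_eq schur_core.
have le r : 1 <= r <= n -> ent (core n lam b) r <= ent b' r.
  by rewrite -core_eq; apply: core_le.
have [j jn lt] := upper_lt_of_le_neq d_upper b'P le ne.
apply: (GVcost_lt lam le jn lt).
by have := b'P.2 j; have := d_upper.2 j; lia.
Qed.

Theorem proposition8p3 (n : nat) (lam eta : seq nat) :
  1 <= n -> is_partition n lam -> UGC n lam eta ->
  gapless n lam (core n lam eta) /\ max_efficiency n lam (core n lam eta).
Proof.
move=> _ lamP [eta_upper eta_flag].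
have core_gapless : gapless n lam (core n lam eta).
  by split; [exact: core_upper | exact: core_flag | exact: carrel_increasing_core].
split=> //; split; first by case: core_gapless.
split=> [|eta' [eta'_upper _] _]; first exact: core_UBP.
exact: GVcost_core_lt.
Qed.
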